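(* In the parallel-links routing game with homogeneous costs described in the context, there exists a link $M\in\mathcal L$ such that (i) $T_l(\hat f_l)\ge T_l(f^*_l)$ for all $l\le M$, and (ii) $T_n(\hat f_n)\le T_n(f^*_n)$ for all $n>M$.
   Context: Parallel-links routing game: users $\mathcal N=\{1,\dots,N\}$ share parallel links $\mathcal L=\{1,\dots,L\}$ from a common source to a common destination; link $l$ has capacity $c_l$, links indexed so that $c_1\ge c_2\ge\dots\ge c_L$. User $i$ has demand $r^i>0$, $R=\sum_ir^i<\sum_lc_l$. A routing strategy of user $i$ is $\mathbf f^i=(f^i_l)_l$ with $f^i_l\ge0$, $\sum_lf^i_l=r^i$; $f_l=\sum_if^i_l$. Homogeneous costs: $J^i(\mathbf f)=\sum_lf^i_lT_l(f_l)$, each $T_l:[0,\infty)\to[0,\infty)$ strictly increasing, convex, continuously differentiable, with $T_l(f_l)=T(c_l-f_l)$ for $f_l<c_l$ and $T_l(f_l)=\infty$ for $f_l\ge c_l$, for a single link-independent function $T$ with $T(c_l-f_l)$ strictly increasing in $f_l$. $(\hat f_l)_l$ are the link totals of the unique Nash equilibrium (feasible profile where each user's strategy minimizes its own cost given the others'). $(f^*_l)_l$ are the link totals minimizing the social cost $\sum_lf_lT_l(f_l)$ over feasible profiles. *)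

From HB Require Import structures.
From mathcomp Require Import all_boot all_order all_algebra.
From mathcomp Require Import all_classical all_reals all_analysis.
Set Implicit Arguments. Unset Strict Implicit. Unset Printing Implicit Defensive.
Import Order.TTheory GRing.Theory Num.Theory.
Import numFieldNormedType.Exports.
Local Open Scope ring_scope.
Local Open Scope classical_set_scope.

Section Routing.
Variables (R : realType) (N L : nat).

(* A routing profile: flow f i l of user i on link l. *)
Definition profile := 'I_N -> 'I_L -> R.

Definition feasible_strategy (r : R) (g : 'I_L -> R) : Prop :=
  (forall l, 0 <= g l) /\ \sum_(l < L) g l = r.

Definition feasible_profile (rs : 'I_N -> R) (f : profile) : Prop :=
  forall i, feasible_strategy (rs i) (f i).

Definition link_total (f : profile) (l : 'I_L) : R := \sum_(i < N) f i l.

(* All link totals strictly below capacity (i.e. all link costs finite). *)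
Definition within_cap (c : 'I_L -> R) (tot : 'I_L -> R) : Prop :=
  forall l, tot l < c l.

(* Homogeneous link cost T_l(x) = T(c_l - x); only meaningful for x < c_l
   (for x >= c_l the paper's cost is +infinity, handled via within_cap). *)
Definition linkcost (T : R -> R) (c : 'I_L -> R) (l : 'I_L) (x : R) : R :=
  T (c l - x).

Definition user_cost T c (f : profile) (i : 'I_N) : R :=
  \sum_(l < L) f i l * linkcost T c l (link_total f l).

Definition replace (f : profile) (i : 'I_N) (g : 'I_L -> R) : profile :=
  fun j => if j == i then g else f j.

(* Nash equilibrium: feasible, finite costs, and no user can lower its cost
   by a unilateral deviation (deviations that push some link to/over capacity
   give that user infinite cost, so only capacity-respecting deviations matter). *)
Definition is_nash T c rs (f : profile) : Prop :=
  [/\ feasible_profile rs f, within_cap c (link_total f) &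
      forall i g, feasible_strategy (rs i) g ->
        within_cap c (link_total (replace f i g)) ->
        user_cost T c f i <= user_cost T c (replace f i g) i].

Definition social_cost T c (tot : 'I_L -> R) : R :=
  \sum_(l < L) tot l * linkcost T c l (tot l).

(* Social optimum: feasible profile with finite cost minimizing the social
   cost over all feasible profiles (infinite-cost profiles never do better). *)
Definition is_social_opt T c rs (f : profile) : Prop :=
  [/\ feasible_profile rs f, within_cap c (link_total f) &
      forall g, feasible_profile rs g -> within_cap c (link_total g) ->
        social_cost T c (link_total f) <= social_cost T c (link_total g)].

(* Standing regularity assumptions on T_l over its finite domain [0, c_l):
   nonnegative, strictly increasing, convex, continuously differentiable
   (continuous on [0,c_l), differentiable on (0,c_l) with continuous derivative
   admitting a finite right limit at 0, i.e. C^1 on [0,c_l)). *)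
Definition regular_linkcost (Tl : R -> R) (cl : R) : Prop :=
  [/\ (forall x, 0 <= x -> x < cl -> 0 <= Tl x),
      (forall x y, 0 <= x -> x < y -> y < cl -> Tl x < Tl y),
      (forall x y t, 0 <= x -> x < cl -> 0 <= y -> y < cl -> 0 <= t -> t <= 1 ->
         Tl (t * x + (1 - t) * y) <= t * Tl x + (1 - t) * Tl y),
      {within `[0, cl[, continuous Tl} &
      [/\ (forall x, 0 < x -> x < cl -> derivable Tl x 1),
          {in `]0, cl[, continuous Tl^`()} &
          exists d0 : R, Tl^`() x @[x --> 0^'+] --> d0]].

End Routing.

From HB Require Import structures.
From mathcomp Require Import all_boot all_order all_algebra.
From mathcomp Require Import all_classical all_reals all_analysis.
From mathcomp Require Import ring lra zify.
Import Order.TTheory GRing.Theory Num.Theory.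
Set Implicit Arguments. Unset Strict Implicit. Unset Printing Implicit Defensive.
Local Open Scope ring_scope.
Local Open Scope classical_set_scope.

(* Let [cost_increment G e x = (x + e) G(x + e) - x G(x)] be the extra total cost of a
   link with cost [G] when its load grows from [x] to [x + e]; for [G] increasing and
   convex it is strictly increasing in [x]. Homogeneity gives
   [T_n(x) = T_l(x + c_l - c_n)], so a link of smaller capacity is a larger one shifted
   by the capacity gap. Shifting a small amount [e] of flow between two links yields one
   inequality between cost increments at the social optimum and, summed over the users
   carrying flow on the source link, one at the Nash equilibrium. If [c_n <= c_l] while
   the equilibrium underloads [l] (loads [a < A]) and overloads [n] (loads [b > B]),
   these chain, with [D_k := cost_increment T_k e], into
   [D_n(B) <= D_n(b - e) <= D_l(a) < D_l(A - e) <= D_n(B)], a contradiction; the Nash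
   step needs [a < b + c_l - c_n], which holds because by the same shifting argument the
   optimum never loads [l] more than [B + c_l - c_n]. Hence every
   link overloaded by the equilibrium precedes every underloaded one, and [M] is the
   index just before the first underloaded link. *)

Definition cost_increment (R : realType) (G : R -> R) (e x : R) : R :=
  (x + e) * G (x + e) - x * G x.

Lemma incr_on_le (R : realType) (G : R -> R) (cl : R) :
  (forall x y, 0 <= x -> x < y -> y < cl -> G x < G y) ->
  forall x y, 0 <= x -> x <= y -> y < cl -> G x <= G y.
Proof.
move=> G_incr x y x0; rewrite le_eqVlt => /predU1P [-> //|xy] ycl.
exact/ltW/G_incr.
Qed.

Section ConvexIncreasingCost.
Variables (R : realType) (G : R -> R) (cl : R).
Hypothesis G_incr : forall x y, 0 <= x -> x < y -> y < cl -> G x < G y.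
Hypothesis G_conv : forall x y t, 0 <= x -> x < cl -> 0 <= y -> y < cl ->
  0 <= t -> t <= 1 -> G (t * x + (1 - t) * y) <= t * G x + (1 - t) * G y.

Lemma convex_increment_le x y e : 0 <= x -> x <= y -> y + e < cl -> 0 < e ->
  G (x + e) - G x <= G (y + e) - G y.
Proof.
move=> x0 xy ycl e0.
have gap_gt0 : 0 < y + e - x by lra.
set t := (y - x) / (y + e - x).
have t0 : 0 <= t by apply: divr_ge0; lra.
have t1 : t <= 1 by rewrite ler_pdivrMr //; lra.
have xcl : x < cl by lra.
have ye0 : 0 <= y + e by lra.
have := G_conv x0 xcl ye0 ycl t0 t1.
have := G_conv x0 xcl ye0 ycl (ltac:(lra) : 0 <= 1 - t) (ltac:(lra) : 1 - t <= 1).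
have -> : t * x + (1 - t) * (y + e) = x + e by rewrite /t; field; lra.
have -> : (1 - t) * x + (1 - (1 - t)) * (y + e) = y by rewrite /t; field; lra.
lra.
Qed.

Lemma cost_increment_lt x y e : 0 <= x -> x < y -> y + e < cl -> 0 < e ->
  cost_increment G e x < cost_increment G e y.
Proof.
move=> x0 xy ycl e0; rewrite /cost_increment.
have G_le := incr_on_le G_incr.
have steeper : x * (G (x + e) - G x) <= y * (G (y + e) - G y).
  apply: ler_pM; rewrite ?subr_ge0 ?(ltW xy) //; first by apply: G_le; lra.
  by apply: convex_increment_le; lra.
have higher : e * G (x + e) < e * G (y + e) by rewrite ltr_pM2l //; apply: G_incr; lra.
lra.
Qed.

Lemma cost_increment_le x y e : 0 <= x -> x <= y -> y + e < cl -> 0 < e ->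
  cost_increment G e x <= cost_increment G e y.
Proof.
move=> x0; rewrite le_eqVlt => /predU1P [-> //|xy] ycl e0.
exact/ltW/cost_increment_lt.
Qed.

End ConvexIncreasingCost.

Lemma sumr_gt0_exists (R : realType) (n : nat) (x : 'I_n -> R) :
  0 < \sum_i x i -> exists i, 0 < x i.
Proof.
move=> sum_gt0; case: (boolP [exists i, 0 < x i]) => [/existsP //|].
rewrite negb_exists => /forallP x_le0.
have : \sum_i x i <= 0 by apply: sumr_le0 => i _; rewrite leNgt x_le0.
lra.
Qed.

Lemma sumr_eq_exists_gt (R : realType) (n : nat) (u v : 'I_n -> R) (l : 'I_n) :
  \sum_i u i = \sum_i v i -> u l < v l -> exists m, v m < u m.
Proof.
move=> sum_eq ulv; case: (boolP [exists m, v m < u m]) => [/existsP //|].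
rewrite negb_exists => /forallP u_le_v.
have : \sum_i u i < \sum_i v i.
  rewrite (bigD1 l) //= [X in _ < X](bigD1 l) //=.
  by apply: ltr_leD => //; apply: ler_sum => m _; rewrite leNgt u_le_v.
by rewrite sum_eq ltxx.
Qed.

Lemma near0_le_pos (R : realType) (n : nat) (x : 'I_n -> R) :
  \forall e \near 0^'+, forall i, 0 < x i -> e <= x i.
Proof. apply: filter_forall => i; apply: filter_imply; exact: nbhs_right_le. Qed.

Section FlowShift.
Variables (R : realType) (N L : nat).
Implicit Types (f : profile R N L) (g : 'I_L -> R) (rs : 'I_N -> R).

Definition shift_flow g (src dst : 'I_L) (e : R) : 'I_L -> R :=
  fun m => g m + (if m == dst then e else 0) - (if m == src then e else 0).

Lemma sum_shift_flow g src dst e : \sum_m shift_flow g src dst e m = \sum_m g m.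
Proof. by rewrite sumrB big_split /= -!big_mkcond !big_pred1_eq addrK. Qed.

Lemma feasible_shift_flow r g src dst e : src != dst -> 0 <= e -> e <= g src ->
  feasible_strategy r g -> feasible_strategy r (shift_flow g src dst e).
Proof.
move=> sd e0 eg [g_ge0 g_sum]; split; last by rewrite sum_shift_flow.
move=> m; rewrite /shift_flow; case: eqP => [->|_]; case: eqP => [->|_].
- by have := g_ge0 src; lra.
- by have := g_ge0 dst; lra.
- lra.
- by have := g_ge0 m; lra.
Qed.

Lemma feasible_replace rs f i g : feasible_profile rs f ->
  feasible_strategy (rs i) g -> feasible_profile rs (replace f i g).
Proof. by move=> hf hg k; rewrite /replace; case: eqP => [->|]. Qed.

Lemma link_total_replace f i g m :
  link_total (replace f i g) m = link_total f m + (g m - f i m).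
Proof.
rewrite /link_total (bigD1 i) //= [in RHS](bigD1 i) //= /replace eqxx.
under eq_bigr => j /negbTE -> do [].
ring.
Qed.

Lemma link_total_shift f i src dst e m :
  link_total (replace f i (shift_flow (f i) src dst e)) m =
  link_total f m + (if m == dst then e else 0) - (if m == src then e else 0).
Proof. rewrite link_total_replace /shift_flow; ring. Qed.

Lemma link_total_ge0 rs f m : feasible_profile rs f -> 0 <= link_total f m.
Proof. by move=> hf; apply: sumr_ge0 => i _; case: (hf i). Qed.

Lemma sum_link_total rs f : feasible_profile rs f ->
  \sum_l link_total f l = \sum_i rs i.
Proof.
move=> hf; rewrite /link_total exchange_big /=.
by apply: eq_bigr => i _; case: (hf i).
Qed.

Lemma sumrB_two (u v : 'I_L -> R) l n : n != l ->
  (forall m, m != l -> m != n -> u m = v m) ->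
  \sum_m u m - \sum_m v m = (u l - v l) + (u n - v n).
Proof.
move=> nl uv; rewrite -sumrB (bigD1 l) //= (bigD1 n) //=.
by rewrite big1 ?addr0 // => m /andP [ml mn]; rewrite uv // subrr.
Qed.

End FlowShift.

Section Equilibria.
Variables (R : realType) (N L : nat) (T : R -> R) (c : 'I_L -> R) (rs : 'I_N -> R).
Hypothesis cost_incr : forall l x y, 0 <= x -> x < y -> y < c l ->
  linkcost T c l x < linkcost T c l y.
Hypothesis cost_conv : forall l x y t, 0 <= x -> x < c l -> 0 <= y -> y < c l ->
  0 <= t -> t <= 1 -> linkcost T c l (t * x + (1 - t) * y)
                       <= t * linkcost T c l x + (1 - t) * linkcost T c l y.

Let cost_le l := incr_on_le (@cost_incr l).

Lemma linkcost_shift (l n : 'I_L) x :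
  linkcost T c l (x + (c l - c n)) = linkcost T c n x.
Proof. by rewrite /linkcost; congr T; ring. Qed.

Lemma cost_increment_shift (l n : 'I_L) x e : c n <= c l -> 0 <= x -> x + e < c n ->
  0 <= e -> cost_increment (linkcost T c n) e x
            <= cost_increment (linkcost T c l) e (x + (c l - c n)).
Proof.
move=> cnl x0 xe_cap e0; rewrite /cost_increment (addrAC x) !linkcost_shift.
have : 0 <= (c l - c n) * (linkcost T c n (x + e) - linkcost T c n x).
  by rewrite mulr_ge0 ?subr_ge0 //; apply: cost_le; lra.
lra.
Qed.

Lemma nash_shift_ge0 (fh : profile R N L) i (l n : 'I_L) e :
  is_nash T c rs fh -> n != l -> 0 < e -> e <= fh i n ->
  link_total fh l + e < c l ->
  0 <= ((fh i l + e) * linkcost T c l (link_total fh l + e)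
         - fh i l * linkcost T c l (link_total fh l))
     + ((fh i n - e) * linkcost T c n (link_total fh n - e)
         - fh i n * linkcost T c n (link_total fh n)).
Proof.
move=> [hf hc hn] nl e0 ef l_cap.
set g := shift_flow (fh i) n l e.
have ln : l != n by rewrite eq_sym.
have g_feas : feasible_strategy (rs i) g := feasible_shift_flow nl (ltW e0) ef (hf i).
have g_cap : within_cap c (link_total (replace fh i g)).
  move=> m; rewrite link_total_shift.
  have [->|ml] := eqVneq m l; first by rewrite (negbTE ln); lra.
  by have := hc m; have [->|mn] := eqVneq m n; lra.
have := hn i g g_feas g_cap; rewrite /user_cost /replace eqxx -/(replace _ _ _) -subr_ge0.
rewrite (sumrB_two nl) => [|m ml mn]; rewrite !link_total_shift /g /shift_flow.
  by rewrite !eqxx (negbTE nl) (negbTE ln) !addr0 !subr0.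
by rewrite (negbTE ml) (negbTE mn) !addr0 !subr0.
Qed.

Lemma social_shift_ge0 (fs : profile R N L) j (l n : 'I_L) e :
  is_social_opt T c rs fs -> n != l -> 0 < e -> e <= fs j l ->
  link_total fs n + e < c n ->
  0 <= ((link_total fs l - e) * linkcost T c l (link_total fs l - e)
         - link_total fs l * linkcost T c l (link_total fs l))
     + ((link_total fs n + e) * linkcost T c n (link_total fs n + e)
         - link_total fs n * linkcost T c n (link_total fs n)).
Proof.
move=> [hf hc hs] nl e0 ef n_cap.
set g := shift_flow (fs j) l n e.
have ln : l != n by rewrite eq_sym.
have g_feas : feasible_profile rs (replace fs j g).
  exact/feasible_replace/(feasible_shift_flow ln (ltW e0) ef (hf j)).
have g_cap : within_cap c (link_total (replace fs j g)).
  move=> m; rewrite link_total_shift.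
  have [->|mn] := eqVneq m n; first by rewrite (negbTE nl); lra.
  by have := hc m; have [->|ml] := eqVneq m l; lra.
have := hs _ g_feas g_cap; rewrite /social_cost -subr_ge0.
rewrite (sumrB_two nl) => [|m ml mn]; rewrite !link_total_shift.
  by rewrite !eqxx (negbTE nl) (negbTE ln) !addr0 !subr0.
by rewrite (negbTE ml) (negbTE mn) !addr0 !subr0.
Qed.

Variables (fh fs : profile R N L).
Hypotheses (hN : is_nash T c rs fh) (hS : is_social_opt T c rs fs).

Lemma nash_cost_increment_le (l n : 'I_L) e : n != l -> 0 < e ->
  (forall i, 0 < fh i n -> e <= fh i n) -> 0 < link_total fh n ->
  link_total fh l + e < c l ->
  linkcost T c l (link_total fh l + e) <= linkcost T c n (link_total fh n - e) ->
  cost_increment (linkcost T c n) e (link_total fh n - e)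
  <= cost_increment (linkcost T c l) e (link_total fh l).
Proof.
move=> nl e0 e_le b_gt0 l_cap W_le_Y; have [hf _ _] := hN.
set a := link_total fh l in l_cap W_le_Y *; set b := link_total fh n in b_gt0 W_le_Y *.
set W := linkcost T c l (a + e) in W_le_Y *; set Ga := linkcost T c l a.
set Y := linkcost T c n (b - e) in W_le_Y *; set Hb := linkcost T c n b.
have Ga_le_W : Ga <= W by apply: cost_le; [exact: link_total_ge0 hf | lra | lra].
pose gain i := fh i l * (W - Ga) - fh i n * (Hb - Y).
have gain_ge i : 0 < fh i n -> e * (Y - W) <= gain i.
  move=> fin; have := nash_shift_ge0 hN nl e0 (e_le i fin) l_cap.
  by rewrite /gain -/a -/b -/W -/Ga -/Y -/Hb; lra.
(* [W <= Y] makes the surplus [e * (Y - W)] nonnegative, so one user on [n] suffices. *)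
have gain_ge0 i : 0 <= gain i.
  have [fil fin] : 0 <= fh i l /\ 0 <= fh i n by case: (hf i) => f_ge0 _.
  have [/gain_ge|fin0] := ltrP 0 (fh i n).
    by apply: le_trans; rewrite mulr_ge0 ?subr_ge0 //; lra.
  by rewrite /gain (_ : fh i n = 0) ?mul0r ?subr0 ?mulr_ge0 ?subr_ge0 //; lra.
have [i0 fi0n] := sumr_gt0_exists b_gt0.
have : e * (Y - W) <= \sum_i gain i.
  rewrite (bigD1 i0) //=; apply: le_trans (gain_ge i0 fi0n) _.
  by rewrite lerDl; apply: sumr_ge0.
have -> : \sum_i gain i = a * (W - Ga) - b * (Hb - Y) by rewrite sumrB -!mulr_suml.
rewrite /cost_increment subrK -/W -/Ga -/Y -/Hb; lra.
Qed.

Lemma social_cost_increment_le j (l n : 'I_L) e : n != l -> 0 < e -> e <= fs j l ->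
  link_total fs n + e < c n ->
  cost_increment (linkcost T c l) e (link_total fs l - e)
  <= cost_increment (linkcost T c n) e (link_total fs n).
Proof.
move=> nl e0 ej n_cap; have := social_shift_ge0 hS nl e0 ej n_cap.
rewrite /cost_increment subrK; lra.
Qed.

Lemma social_order (l n : 'I_L) : c n <= c l -> n != l ->
  link_total fs l <= link_total fs n + (c l - c n).
Proof.
move=> cnl nl; have [hf hc _] := hS.
set A := link_total fs l; set B := link_total fs n.
have B0 : 0 <= B := link_total_ge0 _ hf.
rewrite leNgt; apply/negP => gap.
have [j fjl] : exists j, 0 < fs j l.
  by apply: sumr_gt0_exists; apply: le_lt_trans gap; rewrite addr_ge0 ?subr_ge0.
have Bn : B < c n := hc n.
near (0:R)^'+ => e.
have e0 : 0 < e by near: e; exact: nbhs_right_gt.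
have ej : e <= fs j l by near: e; exact: nbhs_right_le.
have e_gap : e < A - (B + (c l - c n)) by near: e; apply: nbhs_right_lt; lra.
have e_cap : e < c n - B by near: e; apply: nbhs_right_lt; lra.
have Be_cap : B + e < c n by lra.
have := social_cost_increment_le nl e0 ej Be_cap; rewrite -/A -/B.
have := cost_increment_shift cnl B0 Be_cap (ltW e0).
have := @cost_increment_lt _ _ _ (@cost_incr l) (@cost_conv l) (B + (c l - c n)) (A - e) e
  (ltac:(lra)) (ltac:(lra)) (ltac:(rewrite subrK; exact: hc l)) e0.
lra.
Unshelve. all: by end_near.
Qed.

Lemma nash_social_no_crossing (l n : 'I_L) : c n <= c l -> n != l ->
  link_total fh l < link_total fs l -> link_total fs n < link_total fh n -> False.
Proof.
move=> cnl nl al Bb.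
have [hfN hcN _] := hN; have [hfS hcS _] := hS.
have order := social_order cnl nl.
set a := link_total fh l in al *; set A := link_total fs l in al order *.
set B := link_total fs n in Bb order *; set b := link_total fh n in Bb *.
have a0 : 0 <= a := link_total_ge0 _ hfN.
have B0 : 0 <= B := link_total_ge0 _ hfS.
have Al : A < c l := hcS l.
have bn : b < c n := hcN n.
have [j fjl] : exists j, 0 < fs j l by apply: sumr_gt0_exists; exact: le_lt_trans a0 al.
near (0:R)^'+ => e.
have e0 : 0 < e by near: e; exact: nbhs_right_gt.
have e_users : forall i, 0 < fh i n -> e <= fh i n by near: e; exact: near0_le_pos.
have ej : e <= fs j l by near: e; exact: nbhs_right_le.
have e_al : e < A - a by near: e; apply: nbhs_right_lt; lra.
have e_bB : e <= b - B by near: e; apply: nbhs_right_le; lra.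
have e_mid : e <= (b + (c l - c n) - a) / 2 by near: e; apply: nbhs_right_le; lra.
have W_le_Y : linkcost T c l (a + e) <= linkcost T c n (b - e).
  by rewrite -(linkcost_shift l n); apply: cost_le; lra.
have := nash_cost_increment_le nl e0 e_users (ltac:(lra) : 0 < b)
  (ltac:(lra) : a + e < c l) W_le_Y.
have := social_cost_increment_le nl e0 ej (ltac:(lra) : B + e < c n); rewrite -/A -/B.
have := @cost_increment_lt _ _ _ (@cost_incr l) (@cost_conv l) a (A - e) e
  a0 (ltac:(lra)) (ltac:(rewrite subrK; lra)) e0.
have := @cost_increment_le _ _ _ (@cost_incr n) (@cost_conv n) B (b - e) e
  B0 (ltac:(lra)) (ltac:(rewrite subrK; lra)) e0.
lra.
Unshelve. all: by end_near.
Qed.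

End Equilibria.

Lemma exists_separating_index (L : nat) (A B : pred 'I_L) : (0 < L)%N ->
  (forall l n, A l -> B n -> (n < l)%N) -> ((exists l, A l) -> exists n, B n) ->
  exists M : 'I_L,
    (forall l : 'I_L, (l <= M)%N -> ~~ A l) /\ (forall n : 'I_L, (M < n)%N -> ~~ B n).
Proof.
case: L A B => // L A B _ B_before_A A_B.
case: (boolP [exists l, A l]) => [/existsP [l0 Al0]|]; last first.
  rewrite negb_exists => /forallP noA; exists ord_max; split=> [l _|n].
    exact: noA.
  by rewrite ltnNge -ltnS ltn_ord.
have [k Ak k_min] := arg_minnP val Al0.
have [n Bn] := A_B (ex_intro _ l0 Al0).
have nk := B_before_A _ _ Ak Bn.
have k_pred : (k.-1 < L.+1)%N by rewrite (leq_ltn_trans (leq_pred k)).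
exists (inord k.-1); split=> [l|m]; rewrite inordK //.
  by move=> lk; apply/negP => /k_min /=; lia.
by move=> km; apply/negP => /(B_before_A _ _ Ak); lia.
Qed.

Theorem lemma2p3 (R : realType) (N L : nat) (c : 'I_L -> R) (rs : 'I_N -> R)
  (T : R -> R) (fhat fstar : profile R N L) :
  (forall l, 0 < c l) ->
  (forall l m : 'I_L, (l <= m)%N -> c m <= c l) ->
  (forall i, 0 < rs i) ->
  \sum_(i < N) rs i < \sum_(l < L) c l ->
  (forall l, regular_linkcost (linkcost T c l) (c l)) ->
  is_nash T c rs fhat ->
  is_social_opt T c rs fstar ->
  exists M : 'I_L,
    (forall l : 'I_L, (l <= M)%N ->
       linkcost T c l (link_total fstar l) <= linkcost T c l (link_total fhat l)) /\
    (forall n : 'I_L, (M < n)%N ->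
       linkcost T c n (link_total fhat n) <= linkcost T c n (link_total fstar n)).
Proof.
move=> _ c_antitone rs_gt0 demand_lt_cap reg hN hS.
have cost_incr l : forall x y, 0 <= x -> x < y -> y < c l ->
    linkcost T c l x < linkcost T c l y by case: (reg l).
have cost_conv l := let: And5 _ _ conv _ _ := reg l in conv.
have [hfN hcN _] := hN; have [hfS hcS _] := hS.
have L_gt0 : (0 < L)%N.
  rewrite lt0n; apply/eqP => L0; move: demand_lt_cap.
  rewrite [\sum_(l < L) c l]big1 => [|l _]; last by exfalso; case: l => m; rewrite L0.
  by rewrite ltNge sumr_ge0 // => i _; exact: ltW.
have crossing (l n : 'I_L) : link_total fhat l < link_total fstar l ->
    link_total fstar n < link_total fhat n -> (n < l)%N.
  move=> Al Bn; rewrite ltnNge; apply/negP => ln.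
  have [nl|nl] := eqVneq n l; first by move: Bn; rewrite nl => /(lt_trans Al); rewrite ltxx.
  exact: (nash_social_no_crossing cost_incr cost_conv hN hS (c_antitone _ _ ln) nl Al Bn).
have overtake : (exists l, link_total fhat l < link_total fstar l) ->
    exists n, link_total fstar n < link_total fhat n.
  move=> [l Al]; apply: (sumr_eq_exists_gt _ Al).
  by rewrite (sum_link_total hfN) (sum_link_total hfS).
have [M [hA hB]] := @exists_separating_index L
  [pred l | link_total fhat l < link_total fstar l]
  [pred n | link_total fstar n < link_total fhat n] L_gt0 crossing overtake.
exists M; split=> [l /hA|n /hB]; rewrite /= -leNgt => le_tot.
  exact: (incr_on_le (@cost_incr l) (link_total_ge0 _ hfS) le_tot (hcN l)).
exact: (incr_on_le (@cost_incr n) (link_total_ge0 _ hfN) le_tot (hcS n)).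
Qed.
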